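(* Let $X\in\mathbb{R}^{m\times n}_+$, $W\in\mathbb{R}^{m\times r}$, $H\in\mathbb{R}^{r\times n}_+$ with $X=WH$ satisfying the facet-based conditions (FBC) for some parameter $s$, where $d=\operatorname{rank}(X)$. Let $\bar x=\frac1n\sum_{j=1}^n X(:,j)$, $e$ the all-ones vector, and assume $X-\bar x e^\top$ has rank $d-1$ with compact SVD $X-\bar xe^\top=U\Sigma V^\top$, $U\in\mathbb{R}^{m\times(d-1)}$ with orthonormal columns. Let $\tilde X=U^\top(X-\bar xe^\top)\in\mathbb{R}^{(d-1)\times n}$ and $\tilde W=U^\top(W-\bar xe^\top)$ (so $0\in\operatorname{conv}(\tilde X)$, $\operatorname{rank}(\tilde X)=d-1$ and $\tilde X=\tilde WH$). Then the set of vertices of $\operatorname{conv}(\tilde X)^*$ contains all the vertices of $\operatorname{conv}(\tilde W)^*$.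
   Context: For a matrix $M$, $\operatorname{conv}(M)$ denotes the convex hull of its columns. For a set $\mathcal A$ containing the origin in its interior, its dual is $\mathcal A^*=\{y: x^\top y\le 1 \text{ for all } x\in\mathcal A\}$; in particular $\operatorname{conv}(\tilde X)^*=\{\theta:\tilde X^\top\theta\le e\}$. A facet of a polytope is a face of dimension one less than the dimension of the polytope. The unit simplex is $\Delta^r=\{x\in\mathbb{R}^r: x\ge 0,\ \sum_i x_i=1\}$. Facet-based conditions (FBC) with parameter $s$ for $X=WH$, where $d=\operatorname{rank}(X)$: (a) no column of $W$ lies in the convex hull of the other columns of $W$; (b) $H(:,j)\in\Delta^r$ for all $j$; (c) each facet of $\operatorname{conv}(W)$ contains at least $s\ge d$ distinct columns of $X$, and among them at least $d-1$ generate that facet (the convex hull of these $s$ columns has dimension $d-2$); (d) every facet of $\operatorname{conv}(X)$ which is not a facet of $\operatorname{conv}(W)$ contains strictly fewer than $s$ distinct columns of $X$. *)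

From mathcomp Require Import all_boot all_order all_algebra.
Set Implicit Arguments. Unset Strict Implicit. Unset Printing Implicit Defensive.
Import Order.TTheory GRing.Theory Num.Theory.
Local Open Scope ring_scope.

Section Defs.
Variable R : realFieldType.

Definition in_simplex (k : nat) (h : 'cV[R]_k) : Prop :=
  (forall i, 0 <= h i 0) /\ \sum_i h i 0 = 1.

Definition conv_cols (m k : nat) (M : 'M[R]_(m, k)) : 'cV[R]_m -> Prop :=
  fun v => exists h : 'cV[R]_k, in_simplex h /\ v = M *m h.

Definition conv_cols_sub (m k : nat) (M : 'M[R]_(m, k)) (J : {set 'I_k})
  : 'cV[R]_m -> Prop :=
  fun v => exists h : 'cV[R]_k,
    in_simplex h /\ (forall i, i \notin J -> h i 0 = 0) /\ v = M *m h.

Definition has_aff_indep (m : nat) (S : 'cV[R]_m -> Prop) (k : nat) : Prop :=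
  exists (p : 'cV[R]_m) (Q : 'M[R]_(m, k)),
    S p /\ (forall j, S (p + col j Q)) /\ \rank Q = k.

(* S is nonempty and its (affine) dimension is k *)
Definition aff_dim (m : nat) (S : 'cV[R]_m -> Prop) (k : nat) : Prop :=
  has_aff_indep S k /\ ~ has_aff_indep S k.+1.

Definition is_face (m : nat) (P F : 'cV[R]_m -> Prop) : Prop :=
  exists (a : 'cV[R]_m) (b : R),
    (forall x, P x -> (a^T *m x) 0 0 <= b) /\
    (forall x, F x <-> (P x /\ (a^T *m x) 0 0 = b)).

Definition is_facet (m : nat) (P F : 'cV[R]_m -> Prop) : Prop :=
  is_face P F /\ exists k, aff_dim P k.+1 /\ aff_dim F k.

Definition distinct_cols_in (m n : nat) (X : 'M[R]_(m, n)) (J : {set 'I_n})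
  (F : 'cV[R]_m -> Prop) : Prop :=
  (forall j, j \in J -> F (col j X)) /\
  (forall i j, i \in J -> j \in J -> col i X = col j X -> i = j).

Definition FBC (m n r : nat) (X : 'M[R]_(m, n)) (W : 'M[R]_(m, r))
  (H : 'M[R]_(r, n)) (s : nat) : Prop :=
  let d := \rank X in
  (forall i : 'I_r, ~ exists h : 'cV[R]_r,
      in_simplex h /\ h i 0 = 0 /\ col i W = W *m h) /\
  (forall j : 'I_n, in_simplex (col j H)) /\
  (d <= s)%N /\
  (forall F, is_facet (conv_cols W) F ->
     exists J : {set 'I_n}, distinct_cols_in X J F /\ (s <= #|J|)%N /\
       aff_dim (conv_cols_sub X J) (d - 2)) /\
  (forall F, is_facet (conv_cols X) F -> ~ is_facet (conv_cols W) F ->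
     forall J : {set 'I_n}, distinct_cols_in X J F -> (#|J| < s)%N).

Definition dual (k : nat) (A : 'cV[R]_k -> Prop) : 'cV[R]_k -> Prop :=
  fun y => forall x, A x -> (x^T *m y) 0 0 <= 1.

Definition is_vertex (k : nat) (S : 'cV[R]_k -> Prop) (y : 'cV[R]_k) : Prop :=
  S y /\ forall a b (t : R), S a -> S b -> 0 < t -> t < 1 ->
    y = t *: a + (1 - t) *: b -> a = b.

Definition mean_col (m n : nat) (X : 'M[R]_(m, n)) : 'cV[R]_m :=
  (n%:R)^-1 *: (X *m const_mx 1).

End Defs.

(** A point θ with [M^T θ <= 1] is a vertex of [conv(M)^* = {θ : M^T θ <= 1}]
    exactly when the columns of [M] tight at θ have full rank. For a vertex θ
    of [conv(W~)^*], the tight columns of [W~] thus make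
    [{x ∈ conv(W) : (U θ)^T (x - x̄) = 1}] a facet of [conv(W)], as soon as
    [conv(W)] has the same affine hull as [conv(X)]. Conditions (c) and (d)
    force this: otherwise a facet of [conv(W)] avoiding [x̄] (one exists, by
    simplex pivoting) would cut [conv(X)] along a facet that is not a facet of
    [conv(W)] yet contains [s] columns of [X]. By (c) the facet above contains
    columns of [X] whose hull has dimension [d - 2] in a hyperplane missing
    [x̄]; centred, they have rank [d - 1], and they are tight columns of [X~]
    at θ, so θ is a vertex of [conv(X~)^*]. *)

From mathcomp Require Import all_boot all_order all_algebra.
From mathcomp Require Import ring lra zify.
Import Order.TTheory GRing.Theory Num.Theory.
Local Open Scope ring_scope.

Local Notation center W c := (W - c *m const_mx 1).

Section Polytopes.
#[local] Set Implicit Arguments.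
#[local] Unset Strict Implicit.
Context {R : realFieldType}.

Definition slice m (P : 'cV[R]_m -> Prop) (a : 'cV[R]_m) (b : R) : 'cV[R]_m -> Prop :=
  fun x => P x /\ (a^T *m x) 0 0 = b.

Definition colmask r (T : {set 'I_r}) : 'M[R]_r := diag_mx (\row_j (j \in T)%:R).

Definition tight m r (M : 'M[R]_(m, r)) (y : 'cV[R]_m) : {set 'I_r} :=
  [set j | (M^T *m y) j 0 == 1].

Lemma dotC m (a x : 'cV[R]_m) : (a^T *m x) 0 0 = (x^T *m a) 0 0.
Proof. by rewrite -{1}(trmxK x) -trmx_mul mxE. Qed.

Lemma dotB m (a x y : 'cV[R]_m) :
  (a^T *m (x - y)) 0 0 = (a^T *m x) 0 0 - (a^T *m y) 0 0.
Proof. by rewrite mulmxBr !mxE. Qed.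

Lemma trmx_mul_col m k (Q : 'M[R]_(m, k)) (a : 'cV[R]_m) j :
  (Q^T *m a) j 0 = (a^T *m col j Q) 0 0.
Proof. by rewrite dotC tr_col -row_mul [RHS]mxE. Qed.

Lemma mulmx_addZ_entry k r (M : 'M[R]_(r, k)) (z d : 'cV[R]_k) (t : R) j :
  (M *m (z + t *: d)) j 0 = (M *m z) j 0 + t * (M *m d) j 0.
Proof. by rewrite mulmxDr -scalemxAr [LHS]mxE [X in _ + X = _]mxE. Qed.

Lemma col_mulmx m n p (A : 'M[R]_(m, n)) (B : 'M[R]_(n, p)) j :
  col j (A *m B) = A *m col j B.
Proof. by rewrite !colE mulmxA. Qed.

Lemma col_center m r (W : 'M[R]_(m, r)) (c : 'cV[R]_m) j :
  col j (center W c) = col j W - c.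
Proof. by apply/colP => i; rewrite !mxE big_ord1 !mxE mulr1. Qed.

Lemma shift_diff m (q x c : 'cV[R]_m) : x = (q + x - c) - (q - c).
Proof. by rewrite opprB addrA subrK addrC addKr. Qed.

Lemma convex_eq1 (t x y : R) : 0 < t -> t < 1 -> x <= 1 -> y <= 1 ->
  t * x + (1 - t) * y = 1 -> x = 1 /\ y = 1.
Proof.
move=> t0 t1 x1 y1 e.
have p1 : 0 <= t * (1 - x) by rewrite mulr_ge0 ?subr_ge0 // ltW.
have p2 : 0 <= (1 - t) * (1 - y) by rewrite mulr_ge0 ?subr_ge0 // ltW.
have e1 : t * (1 - x) = 0 by lra.
have e2 : (1 - t) * (1 - y) = 0 by lra.
split.
  by move/eqP: e1; rewrite mulf_eq0 gt_eqF //= subr_eq0 => /eqP <-.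
by move/eqP: e2; rewrite mulf_eq0 subr_eq0 (gt_eqF t1) /= subr_eq0 => /eqP <-.
Qed.

Lemma row_free_rowsub p q n (B : 'M[R]_(q, n)) (h : 'I_p -> 'I_q) :
  row_free B -> injective h -> row_free (rowsub h B).
Proof.
case/row_freeP => C BC hinj; apply/row_freeP.
have E : rowsub h (1%:M : 'M[R]_q) *m (rowsub h 1%:M)^T = 1%:M.
  apply/matrixP => i j; rewrite !mxE (bigD1 (h i)) //= big1 ?addr0.
    by rewrite !mxE eqxx mul1r (inj_eq hinj) eq_sym.
  by move=> l /negPf nl; rewrite !mxE eq_sym nl mul0r.
exists (C *m (rowsub h 1%:M)^T).
by rewrite rowsubE mulmxA -(mulmxA _ B) BC mulmx1.
Qed.

Lemma notsubmx_kernel p n (M : 'M[R]_(p, n)) (v : 'rV[R]_n) (th : 'cV[R]_n) :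
  M *m th = 0 -> v *m th != 0 -> ~~ (v <= M)%MS.
Proof.
move=> Mth; apply: contra => /submxP [x ->].
by rewrite -mulmxA Mth mulmx0.
Qed.

Lemma mxrank_col_mx_notsub p n (M : 'M[R]_(p, n)) (v : 'rV[R]_n) :
  ~~ (v <= M)%MS -> \rank (col_mx M v) = (\rank M).+1.
Proof.
move=> nv; apply/eqP; rewrite eqn_leq; apply/andP; split.
  rewrite -addsmxE; apply: leq_trans (mxrank_adds_leqif M v).1 _.
  by rewrite -[(\rank M).+1]addn1 leq_add2l rank_leq_row.
apply: rank_ltmx; rewrite ltmxE -addsmxE addsmxSl /=.
by rewrite col_mx_sub submx_refl.
Qed.

Lemma rank_lt_kernel k r (N : 'M[R]_(k, r)) :
  (\rank N < k)%N -> exists2 d : 'cV[R]_k, d != 0 & d^T *m N = 0.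
Proof.
move=> lt; have nz : kermx N != 0.
  by rewrite -mxrank_eq0 mxrank_ker subn_eq0 -ltnNge.
have [i ri] : exists i, row i (kermx N) != 0.
  apply/existsP; apply: (contraNT _ nz) => /existsPn h.
  by apply/eqP/row_matrixP => i; rewrite row0; apply/eqP/negbNE/h.
exists (row i (kermx N))^T; first by rewrite trmx_eq0.
by rewrite trmxK; apply/sub_kermxP; exact: row_sub.
Qed.

Lemma mxrank_mul_orthonormal m k p (U : 'M[R]_(m, k)) (A : 'M[R]_(m, p)) :
  U^T *m U = 1%:M -> (A^T <= U^T)%MS -> \rank (U^T *m A) = \rank A.
Proof.
move=> hU /submxP [Z eA].
have -> : A = U *m Z^T by rewrite -[A]trmxK eA trmx_mul trmxK.
rewrite mulmxA hU mul1mx; apply/eqP; rewrite eqn_leq mxrankM_maxr andbT.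
by rewrite -{1}[Z^T]mul1mx -hU -mulmxA mxrankM_maxr.
Qed.

Lemma col_colmask k r (M : 'M[R]_(k, r)) (T : {set 'I_r}) j :
  col j (M *m colmask T) = (j \in T)%:R *: col j M.
Proof. by apply/colP => i; rewrite /colmask mul_mx_diag !mxE mulrC. Qed.

Lemma colmask0 r : colmask (set0 : {set 'I_r}) = 0.
Proof. by apply/matrixP => i j; rewrite !mxE in_set0 mul0rn. Qed.

Lemma colmask_submx k r (M : 'M[R]_(k, r)) (T T' : {set 'I_r}) :
  T \subset T' -> ((M *m colmask T)^T <= (M *m colmask T')^T)%MS.
Proof.
move=> sTT'; apply/row_subP => j; rewrite -tr_col col_colmask.
case jT: (j \in T); last by rewrite scale0r trmx0 sub0mx.
have -> : 1%:R *: col j M = col j (M *m colmask T').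
  by rewrite col_colmask (subsetP sTT' _ jT).
by rewrite tr_col row_sub.
Qed.

Lemma colmask_kerP k r (M : 'M[R]_(k, r)) (T : {set 'I_r}) (d : 'cV[R]_k) :
  d^T *m (M *m colmask T) = 0 <-> forall j, j \in T -> (M^T *m d) j 0 = 0.
Proof.
rewrite mulmxA /colmask mul_mx_diag.
have -> : M^T *m d = (d^T *m M)^T by rewrite trmx_mul trmxK.
move: (d^T *m M) => A; split.
  by move=> /matrixP h j jT; have := h 0 j; rewrite !mxE jT mulr1.
move=> h; apply/matrixP => i j; rewrite (ord1 i) !mxE.
case: (boolP (j \in T)) => jT; last by rewrite mulr0.
by have := h j jT; rewrite mxE => ->; rewrite mul0r.
Qed.

(** * Convex hulls of columns *)

Lemma const1_mul_simplex k (h : 'cV[R]_k) : in_simplex h -> const_mx 1 *m h = 1%:M.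
Proof.
case=> _ hs; apply/matrixP => i j; rewrite !ord1 !mxE (eq_bigr (fun l => h l 0)) ?hs //.
by move=> l _; rewrite mxE mul1r.
Qed.

Lemma center_mul_simplex m k (M : 'M[R]_(m, k)) (c : 'cV[R]_m) h :
  in_simplex h -> M *m h - c = center M c *m h.
Proof. by move=> hs; rewrite mulmxBl -mulmxA const1_mul_simplex // mulmx1. Qed.

Lemma center_mul_stochastic m r n (W : 'M[R]_(m, r)) (H : 'M[R]_(r, n)) (c : 'cV[R]_m) :
  (forall j, in_simplex (col j H)) -> center (W *m H) c = center W c *m H.
Proof.
move=> hH; rewrite mulmxBl -mulmxA; congr (_ - _ *m _).
apply/matrixP => i j; rewrite (ord1 i) [RHS]mxE [LHS]mxE.
by rewrite -[LHS](proj2 (hH j)); apply: eq_bigr => l _; rewrite !mxE mul1r.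
Qed.

Lemma in_simplex_mulmx r n (H : 'M[R]_(r, n)) h :
  (forall j, in_simplex (col j H)) -> in_simplex h -> in_simplex (H *m h).
Proof.
move=> hH [h0 h1]; split.
  move=> i; rewrite mxE; apply: sumr_ge0 => j _; apply: mulr_ge0 => //.
  by have [+ _] := hH j => /(_ i); rewrite mxE.
rewrite (eq_bigr (fun i => \sum_j H i j * h j 0)); last by move=> i _; rewrite mxE.
rewrite exchange_big /= -h1; apply: eq_bigr => j _.
rewrite -mulr_suml; have [_ hs] := hH j.
by rewrite (eq_bigr (fun i => col j H i 0)) ?hs ?mul1r // => i _; rewrite mxE.
Qed.

Lemma in_simplex_delta k (j : 'I_k) : in_simplex (delta_mx j 0 : 'cV[R]_k).
Proof.
split; first by move=> i; rewrite mxE ler0n.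
rewrite (bigD1 j) //= big1 ?addr0; first by rewrite mxE !eqxx.
by move=> i /negPf hij; rewrite mxE hij.
Qed.

Lemma in_simplex_uniform k : (0 < k)%N -> in_simplex (const_mx k%:R^-1 : 'cV[R]_k).
Proof.
move=> k0; split; first by move=> i; rewrite mxE invr_ge0 ler0n.
rewrite (eq_bigr (fun _ => k%:R^-1)); last by move=> i _; rewrite mxE.
by rewrite sumr_const card_ord -[_ *+ k]mulr_natr mulVf // pnatr_eq0 -lt0n.
Qed.

Lemma simplex_dot_le1 k (h g : 'cV[R]_k) :
  in_simplex h -> (forall j, g j 0 <= 1) -> (h^T *m g) 0 0 <= 1.
Proof.
case=> h0 h1 hg; rewrite mxE -h1; apply: ler_sum => j _.
by rewrite mxE -{2}(mulr1 (h j 0)); apply: ler_wpM2l.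
Qed.

Lemma conv_cols_col m k (M : 'M[R]_(m, k)) j : conv_cols M (col j M).
Proof. by exists (delta_mx j 0); split; [exact: in_simplex_delta | rewrite colE]. Qed.

Lemma conv_cols_subW m n (X : 'M[R]_(m, n)) J x : conv_cols_sub X J x -> conv_cols X x.
Proof. by case=> h [hs [_ ->]]; exists h. Qed.

Lemma conv_cols_mulmx m r n (W : 'M[R]_(m, r)) (H : 'M[R]_(r, n)) x :
  (forall j, in_simplex (col j H)) -> conv_cols (W *m H) x -> conv_cols W x.
Proof.
move=> hH [h [hs ->]]; exists (H *m h); split; last by rewrite mulmxA.
exact: in_simplex_mulmx.
Qed.

Lemma conv_cols_center m r (W : 'M[R]_(m, r)) (c : 'cV[R]_m) x :
  conv_cols W x -> ((x - c)^T <= (center W c)^T)%MS.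
Proof. by case=> h [hs ->]; rewrite center_mul_simplex // trmx_mul submxMl. Qed.

Lemma conv_cols_sub_dot m n (X : 'M[R]_(m, n)) (J : {set 'I_n}) (a : 'cV[R]_m) b x :
  (forall j, j \in J -> (a^T *m col j X) 0 0 = b) ->
  conv_cols_sub X J x -> (a^T *m x) 0 0 = b.
Proof.
move=> hJ [h [[h0 h1] [hz ->]]].
have hJ' j : j \in J -> (a^T *m X) 0 j = b.
  by move=> jJ; rewrite -(hJ j jJ) -col_mulmx [RHS]mxE.
rewrite mulmxA; move: (a^T *m X) hJ' => A hA.
rewrite mxE -[b]mul1r -h1 mulr_suml; apply: eq_bigr => j _.
case jJ: (j \in J); first by rewrite hA // mulrC.
by rewrite hz ?jJ // mulr0 mul0r.
Qed.

Lemma mean_col_conv m n (X : 'M[R]_(m, n)) : (0 < n)%N -> conv_cols X (mean_col X).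
Proof.
move=> n0; exists (const_mx n%:R^-1); split; first exact: in_simplex_uniform.
rewrite /mean_col scalemxAr; congr (_ *m _).
by apply/matrixP => i j; rewrite !mxE mulr1.
Qed.

Lemma dual_conv_colsP m k (M : 'M[R]_(m, k)) y :
  dual (conv_cols M) y <-> forall j, (M^T *m y) j 0 <= 1.
Proof.
split.
  by move=> D j; have := D _ (conv_cols_col M j); rewrite tr_col -row_mul mxE.
move=> hg x [h [hs ->]]; rewrite trmx_mul -mulmxA; exact: simplex_dot_le1.
Qed.

(** * Affine dimension *)

Lemma has_aff_indep_rank m n k (S : 'cV[R]_m -> Prop) p (M : 'M[R]_(m, n)) :
  S p -> (forall j, S (p + col j M)) -> (k <= \rank M)%N -> has_aff_indep S k.
Proof.
move=> Sp SM hk; rewrite -mxrank_tr in hk.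
pose g i := maxrankfun M^T (widen_ord hk i).
exists p, (rowsub g M^T)^T; split => //; split.
  by move=> j; rewrite -tr_row row_rowsub tr_row trmxK.
rewrite mxrank_tr; apply/eqP.
have -> : rowsub g M^T = rowsub (widen_ord hk) (rowsub (maxrankfun M^T) M^T).
  by rewrite -rowsub_comp.
apply: row_free_rowsub; first exact: maxrowsub_free.
by move=> x y /(congr1 val) /= e; apply: val_inj.
Qed.

Lemma has_aff_indepW m (S : 'cV[R]_m -> Prop) k k' :
  (k' <= k)%N -> has_aff_indep S k -> has_aff_indep S k'.
Proof.
by move=> hk [p [Q [Sp [SQ rQ]]]]; apply: (has_aff_indep_rank Sp SQ); rewrite rQ.
Qed.

Lemma has_aff_indepS m (S S' : 'cV[R]_m -> Prop) k :
  (forall x, S x -> S' x) -> has_aff_indep S k -> has_aff_indep S' k.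
Proof.
move=> hS [p [Q [Sp [SQ rQ]]]]; exists p, Q.
by split; [exact: hS | split => // j; exact: hS].
Qed.

Lemma aff_dim_inj m (S : 'cV[R]_m -> Prop) a b :
  aff_dim S a -> aff_dim S b -> a = b.
Proof.
move=> [ha na] [hb nb]; apply/eqP; rewrite eqn_leq; apply/andP; split.
  by rewrite leqNgt; apply/negP => lt; apply: nb; exact: has_aff_indepW lt ha.
by rewrite leqNgt; apply/negP => lt; apply: na; exact: has_aff_indepW lt hb.
Qed.

Lemma diff_cols_submx m p k (S : 'cV[R]_m -> Prop) (c q : 'cV[R]_m)
    (Q : 'M[R]_(m, k)) (M : 'M[R]_(m, p)) :
  (forall x, S x -> ((x - c)^T <= M^T)%MS) -> S q -> (forall j, S (q + col j Q)) ->
  (Q^T <= M^T)%MS.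
Proof.
move=> hS Sq SQ; apply/row_subP => j; rewrite -tr_col (shift_diff q (col j Q) c).
by rewrite linearB /=; apply: addmx_sub; rewrite ?eqmx_opp; exact: hS.
Qed.

Lemma hyperplane_cols m k (S : 'cV[R]_m -> Prop) (c q a : 'cV[R]_m)
    (Q : 'M[R]_(m, k)) beta :
  (forall x, S x -> (a^T *m (x - c)) 0 0 = beta) -> S q ->
  (forall j, S (q + col j Q)) -> Q^T *m a = 0 /\ ((q - c)^T *m a) 0 0 = beta.
Proof.
move=> hS Sq SQ; split; last by rewrite -dotC hS.
apply/matrixP => j i; rewrite (ord1 i) trmx_mul_col (shift_diff q (col j Q) c).
by rewrite dotB !hS // subrr mxE.
Qed.

Lemma has_aff_indep_span m p (S : 'cV[R]_m -> Prop) (c : 'cV[R]_m) (M : 'M[R]_(m, p)) k :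
  (forall x, S x -> ((x - c)^T <= M^T)%MS) -> has_aff_indep S k -> (k <= \rank M)%N.
Proof.
move=> hS [q [Q [Sq [SQ <-]]]]; rewrite -mxrank_tr -(mxrank_tr M).
by apply: mxrankS; exact: diff_cols_submx hS Sq SQ.
Qed.

Lemma has_aff_indep_hyperplane m p (S : 'cV[R]_m -> Prop) (c a : 'cV[R]_m)
    (M : 'M[R]_(m, p)) beta k :
  beta != 0 ->
  (forall x, S x -> ((x - c)^T <= M^T)%MS /\ (a^T *m (x - c)) 0 0 = beta) ->
  has_aff_indep S k -> (k.+1 <= \rank M)%N.
Proof.
move=> b0 hS [q [Q [Sq [SQ <-]]]].
have [Qa qa] := hyperplane_cols (fun x Sx => (hS x Sx).2) Sq SQ.
have QM := diff_cols_submx (fun x Sx => (hS x Sx).1) Sq SQ.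
have qa0 : (q - c)^T *m a != 0.
  by apply/eqP => /matrixP/(_ 0 0); rewrite qa mxE => e; rewrite e eqxx in b0.
rewrite -mxrank_tr -(mxrank_col_mx_notsub (notsubmx_kernel Qa qa0)) -(mxrank_tr M).
by apply: mxrankS; rewrite col_mx_sub QM (hS _ Sq).1.
Qed.

Lemma aff_dim_conv_cols m r (W : 'M[R]_(m, r)) (c : 'cV[R]_m) :
  conv_cols W c -> aff_dim (conv_cols W) (\rank (center W c)).
Proof.
move=> Wc; split.
  apply: (has_aff_indep_rank (p := c) (M := center W c)) => // j.
  by rewrite col_center addrC subrK; exact: conv_cols_col.
by move/(has_aff_indep_span (@conv_cols_center _ _ W c)); rewrite ltnn.
Qed.

Lemma has_aff_indep_colmask m r D (S : 'cV[R]_m -> Prop) (c : 'cV[R]_m)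
    (W : 'M[R]_(m, r)) (G : 'M[R]_(D, m)) (T : {set 'I_r}) :
  (0 < D)%N -> (forall i, i \in T -> S (col i W)) ->
  \rank (G *m center W c *m colmask T) = D -> has_aff_indep S D.-1.
Proof.
move=> D0 hT rk.
have [i0 i0T] : exists i0, i0 \in T.
  case: (set_0Vmem T) => [T0|[x xT]]; last by exists x.
  by move: D0; rewrite -rk T0 colmask0 mulmx0 mxrank0.
pose w0 := col i0 W; pose Q0 := center W w0 *m colmask T.
apply: (has_aff_indep_rank (p := w0) (M := Q0)); first exact: hT.
  move=> j; rewrite /Q0 col_colmask; case jT: (j \in T).
    by rewrite scale1r col_center addrC subrK; exact: hT.
  by rewrite scale0r addr0; exact: hT.
have E : center W c = center W w0 + (w0 - c) *m const_mx 1.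
  by rewrite mulmxBl addrA subrK.
move: rk; rewrite E mulmxDr mulmxDl => rk.
have h1 : (\rank (G *m ((w0 - c) *m const_mx 1) *m colmask T)%R <= 1)%N.
  rewrite !mulmxA -(mulmxA (G *m (w0 - c))).
  exact: leq_trans (mxrankM_maxl _ _) (rank_leq_col _).
have h2 : (\rank (G *m center W w0 *m colmask T) <= \rank Q0)%N.
  by rewrite -mulmxA; exact: mxrankM_maxr.
have := mxrank_add (G *m center W w0 *m colmask T)
  (G *m ((w0 - c) *m const_mx 1) *m colmask T).
rewrite rk; lia.
Qed.

Lemma rank_colmask_hyperplane m n D (X : 'M[R]_(m, n)) (J : {set 'I_n}) (a c : 'cV[R]_m) :
  (forall j, j \in J -> (a^T *m (col j X - c)) 0 0 = 1) ->
  has_aff_indep (conv_cols_sub X J) D -> (D.+1 <= \rank (center X c *m colmask J))%N.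
Proof.
move=> onJ; apply: (has_aff_indep_hyperplane (c := c) (a := a) (oner_neq0 R)) => x xJ; split.
  case: (xJ) => h [hs [hz ->]]; rewrite center_mul_simplex //.
  have -> : h = colmask J *m h.
    apply/colP => i; rewrite /colmask mul_diag_mx !mxE.
    by case: (boolP (i \in J)) => iJ; rewrite ?mul1r // mul0r hz.
  by rewrite mulmxA trmx_mul submxMl.
have onJ' j : j \in J -> (a^T *m col j X) 0 0 = (a^T *m c) 0 0 + 1.
  by move=> jJ; rewrite -(onJ j jJ) dotB addrC subrK.
by rewrite dotB (conv_cols_sub_dot onJ' xJ); lra.
Qed.

(** * Vertices of dual polyhedra *)

Lemma dual_perturb k r (M : 'M[R]_(k, r)) (th d : 'cV[R]_k) :
  (forall j, (M^T *m th) j 0 <= 1) -> d^T *m (M *m colmask (tight M th)) = 0 ->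
  exists2 e : R, 0 < e & forall sg : R, `|sg| <= 1 ->
    forall j, (M^T *m (th + (e * sg) *: d)) j 0 <= 1.
Proof.
move=> Dth /colmask_kerP dT.
pose f j := (M^T *m th) j 0; pose g j := (M^T *m d) j 0.
pose s j := if j \in tight M th then 1 else (1 - f j) / (1 + `|g j|).
have s0 j : 0 < s j.
  rewrite /s; case: ifP => // jT; apply: divr_gt0; last exact: ltr_wpDr.
  by rewrite subr_gt0 lt_def Dth andbT eq_sym; move: jT; rewrite inE => /negbT.
pose e := \big[Order.min/1]_j s j.
have e0 : 0 < e by apply: lt_bigmin.
have ej j : e <= s j by apply: bigmin_le.
exists e => // sg hsg j; rewrite mulmx_addZ_entry -/(f j) -/(g j).
have hes : e * sg * g j <= e * `|g j|.
  rewrite -mulrA ler_wpM2l ?(ltW e0) //; apply: le_trans (ler_norm _) _.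
  by rewrite normrM -[X in _ <= X]mul1r ler_wpM2r.
case jT: (j \in tight M th).
  by rewrite /g dT // mulr0 addr0 /f; move: jT; rewrite inE => /eqP ->.
have := ej j; rewrite /s jT ler_pdivlMr; last exact: ltr_wpDr.
have := normr_ge0 (g j); lra.
Qed.

Lemma vertex_dual_rank m k (M : 'M[R]_(k, m)) th :
  is_vertex (dual (conv_cols M)) th -> \rank (M *m colmask (tight M th)) = k.
Proof.
case=> /dual_conv_colsP Dth ext; apply/eqP; rewrite eqn_leq rank_leq_row /= leqNgt.
apply/negP => /rank_lt_kernel [d d0 dM].
have [e e0 feas] := dual_perturb Dth dM.
have in_dual sg : `|sg| <= 1 -> dual (conv_cols M) (th + (e * sg) *: d).
  by move=> hsg; apply/dual_conv_colsP; exact: feas.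
have n1 : `|1 : R| <= 1 by rewrite normr1.
have nN1 : `|-1 : R| <= 1 by rewrite normrN normr1.
have half0 : (0 : R) < 1 / 2 by lra.
have half1 : (1 : R) / 2 < 1 by lra.
have mid : th = (1 / 2) *: (th + (e * 1) *: d) + (1 - 1 / 2) *: (th + (e * -1) *: d).
  by apply/matrixP => i j; rewrite !mxE; field.
have := ext _ _ _ (in_dual 1 n1) (in_dual (-1) nN1) half0 half1 mid.
move/(congr1 (fun v => v - th)); rewrite ![th + _]addrC !addrK => /eqP.
rewrite -subr_eq0 -scalerBl mulrN1 mulr1 opprK scaler_eq0 (negPf d0) orbF.
by rewrite (gt_eqF (addr_gt0 e0 e0)).
Qed.

Lemma rank_dual_vertex m k (M : 'M[R]_(k, m)) th :
  dual (conv_cols M) th -> \rank (M *m colmask (tight M th)) = k ->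
  is_vertex (dual (conv_cols M)) th.
Proof.
move=> Dth rk; split => // a b t /dual_conv_colsP Da /dual_conv_colsP Db t0 t1 eth.
have tight_eq j : j \in tight M th -> (M^T *m a) j 0 = (M^T *m b) j 0.
  rewrite inE eth mulmxDr -!scalemxAr; move: (Da j) (Db j).
  move: (M^T *m a) (M^T *m b) => A B hA hB; rewrite !mxE => /eqP.
  by case/(convex_eq1 t0 t1 hA hB) => -> ->.
have : (a - b)^T *m (M *m colmask (tight M th)) = 0 *m (M *m colmask (tight M th)).
  rewrite mul0mx; apply/colmask_kerP => j jT; rewrite mulmxBr.
  by move: (M^T *m a) (M^T *m b) (tight_eq j jT) => A B e; rewrite !mxE e subrr.
have rf : row_free (M *m colmask (tight M th)) by rewrite /row_free rk.
by move/(row_free_inj rf)/eqP; rewrite trmx_eq0 subr_eq0 => /eqP.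
Qed.

Lemma is_vertex_dual0 n (M : 'M[R]_(0, n)) (th : 'cV[R]_0) :
  is_vertex (dual (conv_cols M)) th.
Proof.
split; first by move=> x _; rewrite mxE big_ord0 ler01.
by move=> a b t _ _ _ _ _; rewrite [a]flatmx0 [b]flatmx0.
Qed.

Lemma tight_cols_dual_vertex m n k (X : 'M[R]_(m, n)) (U : 'M[R]_(m, k.+1))
    (c : 'cV[R]_m) (J : {set 'I_n}) (th : 'cV[R]_k.+1) :
  U^T *m U = 1%:M -> ((center X c)^T <= U^T)%MS ->
  dual (conv_cols (U^T *m center X c)) th ->
  (forall j, j \in J -> ((U *m th)^T *m (col j X - c)) 0 0 = 1) ->
  has_aff_indep (conv_cols_sub X J) k ->
  is_vertex (dual (conv_cols (U^T *m center X c))) th.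
Proof.
move=> hU XU Dth onJ hJ; apply: rank_dual_vertex => //.
have rJ : \rank (U^T *m (center X c *m colmask J)) = \rank (center X c *m colmask J).
  by apply: mxrank_mul_orthonormal hU _; rewrite trmx_mul (submx_trans (submxMl _ _) XU).
have Jtight : J \subset tight (U^T *m center X c) th.
  apply/subsetP => j jJ; rewrite inE trmx_mul_col col_mulmx col_center mulmxA.
  by rewrite -trmx_mul onJ.
apply/eqP; rewrite eqn_leq rank_leq_row /=.
apply: leq_trans (rank_colmask_hyperplane onJ hJ) _.
rewrite -rJ mulmxA -mxrank_tr -[Y in (_ <= Y)%N]mxrank_tr.
exact/mxrankS/colmask_submx.
Qed.

(** * Facets by pivoting *)

Lemma row_free_sum0_pos D r (M : 'M[R]_(D, r)) (d : 'cV[R]_D) :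
  row_free M -> M *m (const_mx 1 : 'cV[R]_r) = 0 -> d != 0 -> exists j, 0 < (M^T *m d) j 0.
Proof.
move=> rf M1 d0; apply/existsP; apply: contraT => /existsPn npos.
have sum0 : \sum_j (M^T *m d) j 0 = 0.
  have : (const_mx 1 : 'cV[R]_r)^T *m (M^T *m d) = 0.
    by rewrite mulmxA -trmx_mul M1 trmx0 mul0mx.
  move/matrixP/(_ 0 0); rewrite [LHS]mxE [RHS]mxE => e; rewrite -[RHS]e.
  by apply: eq_bigr => j _; rewrite 2![X in _ = X * _]mxE mul1r.
have g0 : M^T *m d = 0.
  have hn j : predT j -> 0 <= - (M^T *m d) j 0 by rewrite oppr_ge0 leNgt npos.
  have sumN0 : \sum_(j | predT j) - (M^T *m d) j 0 = 0 by rewrite sumrN sum0 oppr0.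
  apply/matrixP => j i; rewrite (ord1 i) [RHS]mxE.
  by apply/eqP; rewrite -oppr_eq0; apply/eqP; exact: (psumr_eq0P hn sumN0).
have : d^T *m M = 0 *m M by rewrite mul0mx -[d^T *m M]trmxK trmx_mul trmxK g0 trmx0.
by move/(row_free_inj rf)/eqP; rewrite trmx_eq0 (negPf d0).
Qed.

Lemma ratio_test D r (M : 'M[R]_(D, r)) (z d : 'cV[R]_D) j0 :
  (forall j, (M^T *m z) j 0 <= 1) -> 0 < (M^T *m d) j0 0 ->
  exists t js, [/\ 0 <= t, forall j, (M^T *m (z + t *: d)) j 0 <= 1,
    0 < (M^T *m d) js 0 & js \in tight M (z + t *: d)].
Proof.
move=> fz gj0; pose g := M^T *m d.
pose F j := (1 - (M^T *m z) j 0) / g j 0.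
have [js gjs jsmin] := arg_minP (P := fun j => 0 < g j 0) F gj0.
pose t := F js; exists t, js; split => //.
- by rewrite /t /F divr_ge0 // ?subr_ge0 // ltW.
- move=> j; rewrite mulmx_addZ_entry -/g.
  case: (ltP 0 (g j 0)) => gj.
    by have := jsmin j gj; rewrite -/t /F ler_pdivlMr //; lra.
  have : t * g j 0 <= 0 by rewrite mulr_ge0_le0 // /t /F divr_ge0 // ?subr_ge0 // ltW.
  by have := fz j; lra.
- rewrite inE mulmx_addZ_entry -/g /t /F divfK; last by rewrite gt_eqF.
  by apply/eqP; lra.
Qed.

Lemma colmask_rank_lt D r (M : 'M[R]_(D, r)) (T T' : {set 'I_r}) (d : 'cV[R]_D) js :
  d^T *m (M *m colmask T) = 0 -> T \subset T' -> js \in T' -> (M^T *m d) js 0 != 0 ->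
  (\rank (M *m colmask T) < \rank (M *m colmask T'))%N.
Proof.
move=> dM sTT' jsT' gjs.
rewrite -(mxrank_tr (M *m colmask T)) -(mxrank_tr (M *m colmask T')).
apply: rank_ltmx; rewrite ltmxE colmask_submx //=; apply/negP => sub.
have Md : (M *m colmask T)^T *m d = 0 by rewrite -[d]trmxK -trmx_mul dM trmx0.
have vd : (col js M)^T *m d != 0.
  by apply: contraNneq gjs => e; rewrite trmx_mul_col dotC e mxE.
have Mjs : (col js M)^T = row js (M *m colmask T')^T.
  by rewrite -tr_col col_colmask jsT' scale1r.
by move: (notsubmx_kernel Md vd); rewrite Mjs (submx_trans (row_sub _ _) sub).
Qed.

Lemma pivot_step D r (M : 'M[R]_(D, r)) (u z : 'cV[R]_D) :
  row_free M -> M *m (const_mx 1 : 'cV[R]_r) = 0 -> (forall j, (M^T *m z) j 0 <= 1) ->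
  (\rank (M *m colmask (tight M z)) < D)%N ->
  exists z', [/\ forall j, (M^T *m z') j 0 <= 1, (u^T *m z') 0 0 <= (u^T *m z) 0 0 &
    (\rank (M *m colmask (tight M z)) < \rank (M *m colmask (tight M z')))%N].
Proof.
move=> rf M1 fz /rank_lt_kernel [d0 d0n dM0].
pose d := if (u^T *m d0) 0 0 <= 0 then d0 else - d0.
have ud : (u^T *m d) 0 0 <= 0.
  rewrite /d; case: ifP => // /negbT; rewrite -ltNge mulmxN.
  by move: (u^T *m d0) => A h; rewrite mxE oppr_le0 ltW.
have dM : d^T *m (M *m colmask (tight M z)) = 0.
  by rewrite /d; case: ifP => _ //; rewrite raddfN /= mulNmx dM0 oppr0.
have dn : d != 0 by rewrite /d; case: ifP; rewrite ?oppr_eq0.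
have [j0 gj0] := row_free_sum0_pos rf M1 dn.
have [t [js [t0 fz' gjs jsT]]] := ratio_test fz gj0.
exists (z + t *: d); split => //.
  have : t * (u^T *m d) 0 0 <= 0 by rewrite mulr_ge0_le0.
  by rewrite mulmx_addZ_entry; lra.
apply: (colmask_rank_lt dM _ jsT); last by rewrite gt_eqF.
have /colmask_kerP dT := dM.
apply/subsetP => j jT; rewrite inE mulmx_addZ_entry dT // mulr0 addr0.
by move: jT; rewrite inE.
Qed.

Lemma dual_vertex_exists D r (M : 'M[R]_(D, r)) (u : 'cV[R]_D) :
  row_free M -> M *m (const_mx 1 : 'cV[R]_r) = 0 ->
  exists z, [/\ forall j, (M^T *m z) j 0 <= 1, (u^T *m z) 0 0 < 1 &
    \rank (M *m colmask (tight M z)) = D].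
Proof.
move=> rf M1.
suff: forall N z, (forall j, (M^T *m z) j 0 <= 1) -> (u^T *m z) 0 0 < 1 ->
    (D - \rank (M *m colmask (tight M z)) <= N)%N ->
    exists z, [/\ forall j, (M^T *m z) j 0 <= 1, (u^T *m z) 0 0 < 1 &
      \rank (M *m colmask (tight M z)) = D].
  move/(_ D 0); apply; last exact: leq_subr.
    by move=> j; rewrite mulmx0 mxE ler01.
  by rewrite mulmx0 mxE ltr01.
elim=> [|N IH] z fz uz hN.
  by exists z; split => //; apply/eqP; rewrite eqn_leq rank_leq_row /=; lia.
case: (ltnP (\rank (M *m colmask (tight M z))) D) => [lt|ge].
  have [z' [fz' uz' rz']] := pivot_step u rf M1 fz lt.
  by apply: (IH z' fz' (le_lt_trans uz' uz)); lia.
by exists z; split => //; apply/eqP; rewrite eqn_leq rank_leq_row.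
Qed.

Lemma dual_conv_le m r D (W : 'M[R]_(m, r)) (c : 'cV[R]_m) (A : 'M[R]_(m, D))
    (z : 'cV[R]_D) x :
  (forall j, ((A^T *m center W c)^T *m z) j 0 <= 1) -> conv_cols W x ->
  ((A *m z)^T *m x) 0 0 <= ((A *m z)^T *m c) 0 0 + 1.
Proof.
move=> fz [h [hs ->]].
have : ((A *m z)^T *m (W *m h - c)) 0 0 <= 1.
  rewrite center_mul_simplex // trmx_mul mulmxA -(mulmxA z^T).
  have -> : z^T *m (A^T *m center W c) = ((A^T *m center W c)^T *m z)^T.
    by rewrite trmx_mul trmxK.
  by rewrite dotC; exact: simplex_dot_le1.
by rewrite dotB; lra.
Qed.

Lemma dual_vertex_facet m r D (W : 'M[R]_(m, r)) (c : 'cV[R]_m) (A : 'M[R]_(m, D))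
    (z : 'cV[R]_D) :
  (0 < D)%N -> conv_cols W c -> \rank (center W c) = D ->
  (forall j, ((A^T *m center W c)^T *m z) j 0 <= 1) ->
  \rank (A^T *m center W c *m colmask (tight (A^T *m center W c) z)) = D ->
  is_facet (conv_cols W) (slice (conv_cols W) (A *m z) (((A *m z)^T *m c) 0 0 + 1)).
Proof.
move=> D0 Wc rW fz rT.
have hyp x : slice (conv_cols W) (A *m z) (((A *m z)^T *m c) 0 0 + 1) x ->
    ((x - c)^T <= (center W c)^T)%MS /\ ((A *m z)^T *m (x - c)) 0 0 = 1.
  by case=> Wx ax; split; [exact: conv_cols_center | rewrite dotB ax; lra].
split.
  by exists (A *m z), (((A *m z)^T *m c) 0 0 + 1); split => // x; exact: dual_conv_le.
exists D.-1; rewrite prednK //; split; first by rewrite -rW; exact: aff_dim_conv_cols.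
split.
  apply: (has_aff_indep_colmask D0 _ rT) => i; rewrite inE => /eqP ti; split; first exact: conv_cols_col.
  have : ((A *m z)^T *m (col i W - c)) 0 0 = 1.
    by rewrite trmx_mul -col_center -mulmxA -col_mulmx -trmx_mul_col.
  by rewrite dotB; lra.
by move/(has_aff_indep_hyperplane (oner_neq0 R) hyp); rewrite prednK // rW ltnn.
Qed.

(** Pivoting is started in the coordinates of [conv(W)] centred at its
    centroid, where [{z : M^T z <= 1}] is bounded. *)
Lemma facet_avoiding m r (W : 'M[R]_(m, r)) (x0 : 'cV[R]_m) :
  conv_cols W x0 -> (0 < \rank (center W x0))%N ->
  exists (a : 'cV[R]_m) (b : R), [/\ forall x, conv_cols W x -> (a^T *m x) 0 0 <= b,
    (a^T *m x0) 0 0 < b & is_facet (conv_cols W) (slice (conv_cols W) a b)].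
Proof.
move=> Wx0 rpos; have r0 := leq_trans rpos (rank_leq_col _).
pose c : 'cV[R]_m := W *m const_mx r%:R^-1.
have Wc : conv_cols W c by exists (const_mx r%:R^-1); split => //; exact: in_simplex_uniform.
pose V := center W c.
have D0 : (0 < \rank V)%N.
  by rewrite /V (aff_dim_inj (aff_dim_conv_cols Wc) (aff_dim_conv_cols Wx0)).
have [Binv BinvB] : exists Binv, Binv *m col_base V = 1%:M.
  by apply/row_fullP; exact: col_base_full.
have RpE : Binv^T^T *m V = row_base V.
  by rewrite trmxK -[X in Binv *m X](mulmx_base V) mulmxA BinvB mul1mx.
have V1 : V *m (const_mx 1 : 'cV[R]_r) = 0.
  have : V *m (const_mx r%:R^-1 : 'cV[R]_r) = 0.
    by rewrite /V -center_mul_simplex ?subrr //; exact: in_simplex_uniform.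
  have -> : (const_mx 1 : 'cV[R]_r) = r%:R *: const_mx r%:R^-1.
    by apply/matrixP => i j; rewrite !mxE mulfV // pnatr_eq0 -lt0n.
  by rewrite -scalemxAr => ->; rewrite scaler0.
have R1 : row_base V *m (const_mx 1 : 'cV[R]_r) = 0 by rewrite -RpE -mulmxA V1 mulmx0.
have [h0 [h0s ex0]] := Wx0.
have [z [fz uz rz]] := dual_vertex_exists (row_base V *m h0) (row_base_free V) R1.
rewrite -RpE in fz rz.
exists (Binv^T *m z), (((Binv^T *m z)^T *m c) 0 0 + 1); split.
- by move=> x; exact: dual_conv_le.
- have : ((Binv^T *m z)^T *m (x0 - c)) 0 0 = ((row_base V *m h0)^T *m z) 0 0.
    rewrite ex0 center_mul_simplex // -/V trmx_mul mulmxA -(mulmxA z^T) RpE.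
    by rewrite -mulmxA dotC.
  by rewrite dotB; move: uz; lra.
- exact: dual_vertex_facet D0 Wc erefl fz rz.
Qed.

(** * The facet-based conditions *)

Lemma facet_cut m n D (X : 'M[R]_(m, n)) (c a : 'cV[R]_m) b (J : {set 'I_n}) :
  conv_cols X c -> \rank (center X c) = D.+1 ->
  (forall x, conv_cols X x -> (a^T *m x) 0 0 <= b) -> (a^T *m c) 0 0 < b ->
  (forall j, j \in J -> (a^T *m col j X) 0 0 = b) ->
  has_aff_indep (conv_cols_sub X J) D ->
  is_facet (conv_cols X) (slice (conv_cols X) a b) /\ aff_dim (slice (conv_cols X) a b) D.
Proof.
move=> Xc rX valid strict onJ hJ.
have hyp x : slice (conv_cols X) a b x ->
    ((x - c)^T <= (center X c)^T)%MS /\ (a^T *m (x - c)) 0 0 = b - (a^T *m c) 0 0.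
  by case=> Xx ax; split; [exact: conv_cols_center | rewrite dotB ax].
have bne : b - (a^T *m c) 0 0 != 0 by rewrite subr_eq0 gt_eqF.
have dimG : aff_dim (slice (conv_cols X) a b) D.
  split; last by move/(has_aff_indep_hyperplane bne hyp); rewrite rX ltnn.
  apply: has_aff_indepS hJ => x xJ; split; first exact: conv_cols_subW xJ.
  exact: conv_cols_sub_dot onJ xJ.
split => //; split; last by exists D; split => //; rewrite -rX; exact: aff_dim_conv_cols.
by exists a, b; split; [exact: valid | move=> x; exact: iff_refl].
Qed.

Lemma fbc_same_aff_dim m n r s D (X : 'M[R]_(m, n)) (W : 'M[R]_(m, r))
    (H : 'M[R]_(r, n)) (c : 'cV[R]_m) :
  X = W *m H -> (forall j, in_simplex (col j H)) -> conv_cols X c ->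
  \rank (center X c) = D.+1 ->
  (forall F, is_facet (conv_cols W) F -> exists J : {set 'I_n},
     distinct_cols_in X J F /\ (s <= #|J|)%N /\ aff_dim (conv_cols_sub X J) D) ->
  (forall F, is_facet (conv_cols X) F -> ~ is_facet (conv_cols W) F ->
     forall J : {set 'I_n}, distinct_cols_in X J F -> (#|J| < s)%N) ->
  \rank (center W c) = D.+1.
Proof.
move=> XWH hH Xc rX hC hD.
have XW x : conv_cols X x -> conv_cols W x by rewrite XWH; exact: conv_cols_mulmx.
have Wc := XW c Xc.
have rXW : (D.+1 <= \rank (center W c))%N.
  rewrite -rX -mxrank_tr -(mxrank_tr (center W c)); apply: mxrankS.
  by rewrite XWH center_mul_stochastic // trmx_mul submxMl.
apply/eqP; rewrite eqn_leq rXW andbT leqNgt; apply/negP => rW.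
have [a [b [valid strict facetF]]] := facet_avoiding Wc (leq_trans (ltn0Sn D) rXW).
have [J [[JF Jd] [sJ [hJ _]]]] := hC _ facetF.
have onJ j : j \in J -> (a^T *m col j X) 0 0 = b by move=> jJ; have [_ ->] := JF j jJ.
have [facetG dimG] := facet_cut Xc rX (fun x Xx => valid x (XW x Xx)) strict onJ hJ.
have notW : ~ is_facet (conv_cols W) (slice (conv_cols X) a b).
  case=> _ [k [dimW dimG']]; rewrite (aff_dim_inj dimG' dimG) in dimW.
  by move: rW; rewrite (aff_dim_inj (aff_dim_conv_cols Wc) dimW) ltnn.
suff : (#|J| < s)%N by rewrite ltnNge sJ.
apply: (hD _ facetG notW J).
by split => // j jJ; split; [exact: conv_cols_col | exact: onJ].
Qed.

End Polytopes.

Theorem lemma2 (R : realFieldType) (m n r s d : nat)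
  (X : 'M[R]_(m, n)) (W : 'M[R]_(m, r)) (H : 'M[R]_(r, n))
  (hX : forall i j, 0 <= X i j) (hH : forall i j, 0 <= H i j)
  (hXWH : X = W *m H)
  (hd : \rank X = d)
  (hFBC : FBC X W H s)
  (hrk : \rank (X - mean_col X *m const_mx 1) = d.-1)
  (U : 'M[R]_(m, d.-1))
  (hU : U^T *m U = 1%:M)
  (hSVD : exists (sigma : 'rV[R]_(d.-1)) (V : 'M[R]_(n, d.-1)),
      (forall i, 0 < sigma 0 i) /\ V^T *m V = 1%:M /\
      X - mean_col X *m const_mx 1 = U *m diag_mx sigma *m V^T) :
  let Xt := U^T *m (X - mean_col X *m const_mx 1) in
  let Wt := U^T *m (W - mean_col X *m const_mx 1) in
  forall theta : 'cV[R]_(d.-1),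
    is_vertex (dual (conv_cols Wt)) theta ->
    is_vertex (dual (conv_cols Xt)) theta.
Proof.
destruct d as [|[|k]]; try by move=> Xt Wt th _; exact: is_vertex_dual0.
move=> Xt Wt theta vWt.
have [_ [hHs [_ [hC hD]]]] := hFBC.
rewrite hd !subSS subn0 in hC.
set xb := mean_col X in hrk hSVD Xt Wt vWt *.
have n0 : (0 < n)%N by apply: leq_trans (rank_leq_col X); rewrite hd.
have Xxb : conv_cols X xb by exact: mean_col_conv.
have Wxb : conv_cols W xb by move: Xxb; rewrite {1}hXWH; exact: conv_cols_mulmx.
have rW := fbc_same_aff_dim hXWH hHs Xxb hrk hC hD.
have [/dual_conv_colsP dWt _] := vWt.
have facetF := dual_vertex_facet (ltn0Sn _) Wxb rW dWt (vertex_dual_rank vWt).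
have [J [[JF _] [_ [hJ _]]]] := hC _ facetF.
have XU : ((center X xb)^T <= U^T)%MS.
  by case: hSVD => sigma [V [_ [_ ->]]]; rewrite !trmx_mul mulmxA submxMl.
apply: (tight_cols_dual_vertex hU XU _ _ hJ) => [x|j jJ].
  rewrite hXWH center_mul_stochastic // mulmxA => /(conv_cols_mulmx hHs).
  exact: (proj1 vWt).
by have [_ e] := JF j jJ; rewrite dotB e addrC addKr.
Qed.
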